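(* Let $\Gamma$ be a finite group, $S\subseteq\Gamma$, $g\ge 2$, and $\Sigma$ an $|S|$-list of $\Gamma$. If there is an $RSM_\Gamma(S,g;\Sigma)$, then there is an $RSM_\Gamma(S,g+i;\Sigma)$ in each of the following cases: (1) $S=-S$ and $i\ge 2$ is even; (2) $S=\Gamma$, $\Gamma$ has a complete mapping, and $i\ge 1$.
   Context: Let $\Gamma$ be a group (written additively, not necessarily abelian), $S\subseteq\Gamma$ and $\Sigma$ an $|S|$-list (multiset of $|S|$ elements) of $\Gamma$. A row-sum matrix $RSM_\Gamma(S,g;\Sigma)$ is an $|S|\times g$ matrix ($g\ge2$) with entries in $\Gamma$ such that each column is a permutation (arrangement) of $S$ and the multiset of left-to-right row sums $r_1+\cdots+r_g$ equals $\Sigma$. $-S=\{-s: s\in S\}$. A complete mapping of $\Gamma$ is a permutation $\pi$ of $\Gamma$ such that $x\mapsto x+\pi(x)$ is also a permutation of $\Gamma$. *)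

(* the finite group Gamma is a finGroupType (written
   multiplicatively: the paper's additive + is the group law *, -x is x^-1). *)
From mathcomp Require Import all_boot fingroup perm matrix.
Set Implicit Arguments. Unset Strict Implicit. Unset Printing Implicit Defensive.

Local Open Scope group_scope.

Definition row_sum (gT : finGroupType) (k g : nat) (A : 'M[gT]_(k, g)) (i : 'I_k) : gT :=
  \prod_(j < g) A i j.

Definition is_RSM (gT : finGroupType) (S : {set gT}) (g : nat) (Sigma : seq gT)
    (A : 'M[gT]_(#|S|, g)) : Prop :=
  [/\ 2 <= g,
      (forall j : 'I_g, injective (fun i : 'I_#|S| => A i j) /\
                         (forall i : 'I_#|S|, A i j \in S)) &
      perm_eq [seq row_sum A i | i <- enum 'I_#|S|] Sigma].

Arguments is_RSM {gT} S g Sigma A.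

Definition has_RSM (gT : finGroupType) (S : {set gT}) (g : nat) (Sigma : seq gT) : Prop :=
  exists A : 'M[gT]_(#|S|, g), is_RSM S g Sigma A.

Definition complete_mapping (gT : finGroupType) (pi : {perm gT}) : Prop :=
  injective (fun x : gT => x * pi x).

Definition has_complete_mapping (gT : finGroupType) : Prop :=
  exists pi : {perm gT}, complete_mapping pi.

(* Appending columns whose rows all multiply to the identity does not change
   the row sums.  If S = -S, the two columns (s_i) and (-s_i), for an
   enumeration (s_i) of S, are such a block, which gives g -> g + 2.  If pi is
   a complete mapping of Gamma, every entry a of the first column factors
   uniquely as a = y + pi(y); splitting that column into the columns (y) and
   (pi(y)) keeps both arrangements of Gamma and the row sums, which gives
   g -> g + 1. *)
From mathcomp Require Import all_boot fingroup perm matrix.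
Set Implicit Arguments. Unset Strict Implicit. Unset Printing Implicit Defensive.
Local Open Scope group_scope.

Section RowSumMatrices.

Variables (gT : finGroupType) (S : {set gT}).

Definition arranges_cols n (A : 'M[gT]_(#|S|, n)) : Prop :=
  forall j : 'I_n, injective (fun i : 'I_#|S| => A i j) /\
                   (forall i : 'I_#|S|, A i j \in S).

Lemma row_sum_row_mx k m n (A : 'M[gT]_(k, m)) (C : 'M[gT]_(k, n)) i :
  row_sum (row_mx A C) i = row_sum A i * row_sum C i.
Proof.
rewrite /row_sum big_split_ord /=.
by congr (_ * _); apply: eq_bigr => j _; rewrite ?row_mxEl ?row_mxEr.
Qed.

Lemma arranges_cols_row_mx m n (A : 'M[gT]_(#|S|, m)) (C : 'M[gT]_(#|S|, n)) :
  arranges_cols A -> arranges_cols C -> arranges_cols (row_mx A C).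
Proof.
move=> arrA arrC j; rewrite -(splitK j); case: (split j) => j' /=.
  by have [injA inA] := arrA j'; split=> [i1 i2|i]; rewrite ?row_mxEl //; apply: injA.
by have [injC inC] := arrC j'; split=> [i1 i2|i]; rewrite ?row_mxEr //; apply: injC.
Qed.

Lemma has_RSM_append_trivial g n Sigma (C : 'M[gT]_(#|S|, n)) :
  has_RSM S g Sigma -> arranges_cols C -> (forall i, row_sum C i = 1) ->
  has_RSM S (g + n) Sigma.
Proof.
move=> [A [g2 arrA sumsA]] arrC sumsC; exists (row_mx A C); split.
- exact: leq_trans g2 (leq_addr _ _).
- exact: arranges_cols_row_mx.
- by under eq_map => i do rewrite row_sum_row_mx sumsC mulg1.
Qed.

Lemma has_RSM_addn2 g Sigma :
  [set x^-1 | x in S] = S -> has_RSM S g Sigma -> has_RSM S (g + 2) Sigma.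
Proof.
move=> invS rsm.
pose C : 'M[gT]_(#|S|, 2) :=
  (\matrix_(i, j) if j == ord0 then enum_val i else (enum_val i)^-1)%R.
apply: (has_RSM_append_trivial rsm (C := C)).
- case=> [[|[|//]] lt_j2]; split=> [i1 i2|i]; rewrite !mxE /=.
  + exact: enum_val_inj.
  + exact: enum_valP.
  + by move/invg_inj/enum_val_inj.
  + by rewrite -[in X in _ \in X]invS imset_f ?enum_valP.
- by move=> i; rewrite /row_sum !big_ord_recl big_ord0 !mxE /= mulg1 mulgV.
Qed.

Lemma has_RSM_split_first_col g Sigma (A : 'M[gT]_(#|S|, g.+1))
    (u v : 'I_#|S| -> gT) :
  is_RSM S g.+1 Sigma A ->
  arranges_cols (\col_i u i)%R -> arranges_cols (\col_i v i)%R ->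
  (forall i, A i ord0 = u i * v i) ->
  has_RSM S g.+2 Sigma.
Proof.
move=> [g2 arrA sumsA] arrU arrV Auv.
pose A' : 'M[gT]_(#|S|, g.+1) :=
  (\matrix_(i, j) if j == ord0 then v i else A i j)%R.
have arrA' : arranges_cols A'.
  move=> j; rewrite /A'; have [->|/negPf j_neq0] := eqVneq j ord0.
    have [injV inV] := arrV ord0.
    split=> [i1 i2|i]; rewrite !mxE /=; last by have := inV i; rewrite mxE.
    by move=> eq_v; apply: injV; rewrite /= !mxE.
  by have [injA inA] := arrA j; split=> [i1 i2|i]; rewrite !mxE j_neq0 ?inA //; apply: injA.
exists (row_mx (\col_i u i) A')%R; split => //.
- exact: arranges_cols_row_mx arrU arrA'.
- apply: etrans sumsA; congr perm_eq; apply: eq_map => i.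
  have -> := row_sum_row_mx (\col_i0 u i0)%R A' i.
  rewrite /row_sum big_ord1 big_ord_recl [in RHS]big_ord_recl !mxE /= Auv -mulgA.
  by congr (_ * (_ * _)); apply: eq_bigr => j _; rewrite mxE.
Qed.

End RowSumMatrices.

Lemma complete_mapping_factor (gT : finGroupType) (pi : {perm gT}) :
  complete_mapping pi -> exists sigma : {perm gT}, forall z, sigma z * pi (sigma z) = z.
Proof.
move=> cm; exists (perm cm)^-1 => z.
by rewrite -[RHS](permKV (perm cm) z) permE.
Qed.

Lemma has_RSM_addn1 (gT : finGroupType) g (Sigma : seq gT) :
  has_complete_mapping gT -> has_RSM [set: gT] g Sigma -> has_RSM [set: gT] (g + 1) Sigma.
Proof.
move=> [pi /complete_mapping_factor [sigma factor]] [A rsmA].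
case: g A rsmA => [|g] A rsmA; first by case: rsmA.
rewrite addn1; have [_ arrA _] := rsmA; have [injA0 _] := arrA ord0.
apply: (has_RSM_split_first_col (u := fun i => sigma (A i ord0))
                                (v := fun i => pi (sigma (A i ord0)))) rsmA _ _ _.
- by move=> j; split=> [i1 i2|i]; rewrite !mxE ?in_setT // => /perm_inj /injA0.
- by move=> j; split=> [i1 i2|i]; rewrite !mxE ?in_setT // => /perm_inj/perm_inj/injA0.
- by move=> i; rewrite factor.
Qed.

Lemma has_RSM_iter (gT : finGroupType) (S : {set gT}) (Sigma : seq gT) k :
  (forall g, has_RSM S g Sigma -> has_RSM S (g + k) Sigma) ->
  forall g m, has_RSM S g Sigma -> has_RSM S (g + k * m) Sigma.
Proof.
move=> step g m rsm; elim: m => [|m IH]; first by rewrite muln0 addn0.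
by rewrite mulnS addnCA addnC; apply: step.
Qed.

Theorem mainTheorem5 (gT : finGroupType) (S : {set gT}) (g : nat) (Sigma : seq gT) :
  2 <= g -> size Sigma = #|S| -> has_RSM S g Sigma ->
  ([set (x^-1)%g | x in S] = S ->
     forall i : nat, 2 <= i -> ~~ odd i -> has_RSM S (g + i) Sigma) /\
  (S = [set: gT] -> has_complete_mapping gT ->
     forall i : nat, 1 <= i -> has_RSM S (g + i) Sigma).
Proof.
move=> _ _ rsm; split.
  move=> invS i _ /negPf even_i.
  rewrite -(odd_double_half i) even_i add0n -mul2n.
  exact: has_RSM_iter (fun g' => has_RSM_addn2 invS) g _ rsm.
move=> eqS cm i _; subst S; rewrite -[i]mul1n.
exact: has_RSM_iter (fun g' => has_RSM_addn1 cm) g i rsm.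
Qed.
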